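(* Let $A,B$ be set-germs at $0\in\mathbb{R}^n$ with $0\in\overline{A}\cap\overline{B}$ and $D(A)\subseteq D(B)$. If $A$ satisfies condition (WSSP)-relative to $B$, then $A$ satisfies condition (SSP)-relative to $B$. Hence the relative conditions (SSP) and (WSSP) are equivalent.
   Context: For a set-germ $A\subset\mathbb{R}^n$ at $0$ with $0\in\overline A$, $D(A)=\{a\in S^{n-1}:\exists\, x_i\in A\setminus\{0\},\ x_i\to0,\ x_i/\|x_i\|\to a\}$. For sequences, $\|u_m\|\ll\|v_m\|,\|w_m\|$ means $\|u_m\|/\|v_m\|\to0$ and $\|u_m\|/\|w_m\|\to0$. $A$ satisfies condition (SSP)-relative to $B$ if for every sequence $a_m\in B$ tending to $0$ with $\lim a_m/\|a_m\|\in D(A)$ there is a sequence $b_m\in A$ with $\|a_m-b_m\|\ll\|a_m\|,\|b_m\|$. $A$ satisfies condition (WSSP)-relative to $B$ if for every sequence $a_m\in B$ tending to $0$ with $\lim a_m/\|a_m\|\in D(A)$ there is a subsequence $(m_j)$ and points $b_{m_j}\in A$ with $\|a_{m_j}-b_{m_j}\|\ll\|a_{m_j}\|,\|b_{m_j}\|$ as $j\to\infty$. *)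

From HB Require Import structures.
From mathcomp Require Import all_boot all_order all_algebra.
From mathcomp Require Import all_classical all_reals all_analysis.
Set Implicit Arguments. Unset Strict Implicit. Unset Printing Implicit Defensive.
Import Order.TTheory GRing.Theory Num.Theory.
Import numFieldNormedType.Exports.
Local Open Scope classical_set_scope.
Local Open Scope ring_scope.

Section Germs.
Variables (R : realType) (n : nat).
Notation V := 'rV[R]_n.

Definition enorm (x : V) : R := Num.sqrt (\sum_(i < n) (x ord0 i) ^+ 2).

Definition normalize (x : V) : V := (enorm x)^-1 *: x.

Definition tends0 (x : nat -> V) : Prop :=
  (fun m => enorm (x m)) @ \oo --> (0 : R).

Definition tendsto (x : nat -> V) (a : V) : Prop :=
  (fun m => enorm (x m - a)) @ \oo --> (0 : R).

Definition Dir (A : set V) : set V :=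
  [set a | enorm a = 1 /\
     exists x : nat -> V, (forall i, A (x i) /\ x i != 0) /\
       tends0 x /\ tendsto (normalize \o x) a].

(* ||u_m|| << ||v_m|| : ||u_m|| / ||v_m|| -> 0, written without division *)
Definition llt (u v : nat -> V) : Prop :=
  forall eps : R, 0 < eps -> \forall m \near \oo, enorm (u m) <= eps * enorm (v m).

(* admissible sequences a_m in B (a_m <> 0 so that a_m/||a_m|| makes sense) *)
Definition adm (A B : set V) (a : nat -> V) : Prop :=
  (forall m, B (a m) /\ a m != 0) /\ tends0 a /\
  exists d, Dir A d /\ tendsto (normalize \o a) d.

Definition SSP_rel (A B : set V) : Prop :=
  forall a : nat -> V, adm A B a ->
    exists b : nat -> V, (forall m, A (b m)) /\
      llt (fun m => a m - b m) a /\ llt (fun m => a m - b m) b.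

Definition WSSP_rel (A B : set V) : Prop :=
  forall a : nat -> V, adm A B a ->
    exists (mj : nat -> nat) (b : nat -> V),
      (forall j, (mj j < mj j.+1)%N) /\ (forall j, A (b j)) /\
      llt (fun j => a (mj j) - b j) (a \o mj) /\ llt (fun j => a (mj j) - b j) b.

End Germs.

From HB Require Import structures.
From mathcomp Require Import all_boot all_order all_algebra.
From mathcomp Require Import all_classical all_reals all_analysis.
Import Order.TTheory GRing.Theory Num.Theory.
Import numFieldNormedType.Exports.
Local Open Scope classical_set_scope.
Local Open Scope ring_scope.
Set Implicit Arguments. Unset Strict Implicit. Unset Printing Implicit Defensive.

(* If (WSSP) holds, then for every eps > 0 eventually every a_m has an
   eps-approximation in A: otherwise the a_m without one would form an
   admissible subsequence to which (WSSP) does not apply.  Choosing for each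
   m a point of A approximating a_m at the best scale 1/(k+1), k <= m, that
   is available gives a single sequence b_m witnessing (SSP). *)

Lemma increasing_ge_id (f : nat -> nat) :
  (forall k, (f k < f k.+1)%N) -> forall k, (k <= f k)%N.
Proof. by move=> f_incr; elim=> // k IHk; exact: ssrnat.leq_ltn_trans IHk (f_incr k). Qed.

Lemma increasing_cvgy (f : nat -> nat) :
  (forall k, (f k < f k.+1)%N) -> f @ \oo --> \oo.
Proof.
move=> f_incr P [N _ PN]; exists N => // k /= leNk; apply: PN; rewrite /=.
exact: (ssrnat.leq_trans leNk (increasing_ge_id f_incr k)).
Qed.

Lemma cvg_subseq (T : topologicalType) (u : nat -> T) (l : T) (f : nat -> nat) :
  (forall k, (f k < f k.+1)%N) -> u @ \oo --> l -> (u \o f) @ \oo --> l.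
Proof. by move=> f_incr; apply: cvg_comp; exact: increasing_cvgy. Qed.

Lemma not_near_subseq (P : nat -> Prop) : ~ (\forall m \near \oo, P m) ->
  exists f : nat -> nat, (forall k, (f k < f k.+1)%N) /\ forall k, ~ P (f k).
Proof.
move=> notP.
have later_notP (N : nat) : exists m, (N < m)%N /\ ~ P m.
  apply: contrapT => /forallNP allP; apply: notP; exists N.+1 => // m /= ltNm.
  by apply: contrapT => Pm; apply: (allP m).
have [f [_ f_step]] := dependent_choice (fun N => cid (later_notP N)) 0%N.
exists (f \o S) => /=; split => k; first exact: (f_step k.+1).1.
exact: (f_step k).2.
Qed.

Section DiagonalChoice.
Variables (T : Type) (Q : T -> Prop) (P : nat -> nat -> T -> Prop).
Hypothesis Q_inhabited : exists x, Q x.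
Hypothesis P_antitone : forall m k x, P m k.+1 x -> P m k x.

Lemma P_antitone_le m j k x : (k <= j)%N -> P m j x -> P m k x.
Proof.
move=> /subnK <-; elim: (j - k)%N => // i IHi.
by rewrite addSn => /P_antitone /IHi.
Qed.

Lemma best_witness m N : exists2 x, Q x &
  forall k, (k <= N)%N -> (exists2 y, Q y & P m k y) -> P m k x.
Proof.
elim: N => [|N [x Qx x_best]].
  have [[y Qy Py] | noP] := pselect (exists2 y, Q y & P m 0 y).
    by exists y => // k; rewrite leqn0 => /eqP ->.
  have [x0 Qx0] := Q_inhabited.
  by exists x0 => // k; rewrite leqn0 => /eqP -> /noP.
have [[y Qy Py] | noP] := pselect (exists2 y, Q y & P m N.+1 y).
  by exists y => // k leNk _; exact: P_antitone_le leNk Py.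
exists x => // k; rewrite leq_eqVlt => /orP [/eqP -> /noP [] | ltkN].
exact: x_best.
Qed.

Lemma near_diagonal_choice :
  (forall k, \forall m \near \oo, exists2 x, Q x & P m k x) ->
  exists2 b : nat -> T, (forall m, Q (b m)) & forall k, \forall m \near \oo, P m k (b m).
Proof.
move=> near_P.
exists (fun m => s2val (cid2 (best_witness m m))) => [m|k]; first exact: s2valP.
have [N _ PN] := near_P k; exists (maxn N k) => // m /=.
rewrite geq_max => /andP [leNm lekm].
by apply: (s2valP' (cid2 (best_witness m m))) => //; exact: PN.
Qed.

End DiagonalChoice.

Section RelativeSSP.
Variables (R : realType) (n : nat).
Notation V := 'rV[R]_n.
Implicit Types (A B : set V) (a b : nat -> V) (x y : V).

Definition approx x y (e : R) :=
  enorm (x - y) <= e * enorm x /\ enorm (x - y) <= e * enorm y.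

Lemma enorm_ge0 x : 0 <= enorm x.
Proof. exact: sqrtr_ge0. Qed.

Lemma approx_le x y (e1 e2 : R) : e1 <= e2 -> approx x y e1 -> approx x y e2.
Proof.
move=> le_e [lex ley]; split.
  by apply: le_trans lex _; apply: ler_wpM2r => //; exact: enorm_ge0.
by apply: le_trans ley _; apply: ler_wpM2r => //; exact: enorm_ge0.
Qed.

Lemma approx_lltP a b :
  (forall e : R, 0 < e -> \forall m \near \oo, approx (a m) (b m) e) <->
  llt (fun m => a m - b m) a /\ llt (fun m => a m - b m) b.
Proof.
split=> [near_ab | [llt_a llt_b] e e_gt0].
  by split=> e e_gt0; apply: filterS (near_ab e e_gt0) => m [].
by apply: filterS2 (llt_a e e_gt0) (llt_b e e_gt0) => m.
Qed.

Lemma adm_subseq A B a (f : nat -> nat) :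
  (forall k, (f k < f k.+1)%N) -> adm A B a -> adm A B (a \o f).
Proof.
move=> f_incr [a_B [a_0 [d [Dd a_d]]]]; split; first by move=> m; exact: a_B.
split; first exact: (cvg_subseq f_incr a_0).
by exists d; split => //; exact: (cvg_subseq f_incr a_d).
Qed.

Lemma adm_inhabited A B a : adm A B a -> exists x, A x.
Proof. by move=> [_ [_ [d [[_ [x [x_A _]]] _]]]]; exists (x 0%N); case: (x_A 0%N). Qed.

Lemma WSSP_near_approx A B a : WSSP_rel A B -> adm A B a ->
  forall e : R, 0 < e -> \forall m \near \oo, exists2 y, A y & approx (a m) y e.
Proof.
move=> wssp adm_a e e_gt0; apply: contrapT => /not_near_subseq [f [f_incr no_approx]].
have [mj [b [_ [b_A /approx_lltP near_ab]]]] := wssp _ (adm_subseq f_incr adm_a).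
have [j approx_j] := filter_ex (near_ab e e_gt0).
by apply: (no_approx (mj j)); exists (b j).
Qed.

Lemma WSSP_SSP_rel A B : WSSP_rel A B -> SSP_rel A B.
Proof.
move=> wssp a adm_a.
pose P m k y := approx (a m) y k.+1%:R^-1.
have P_antitone m k y : P m k.+1 y -> P m k y.
  by apply: approx_le; rewrite lef_pV2 ?posrE ?ltr0n // ler_nat.
have near_P k : \forall m \near \oo, exists2 y, A y & P m k y.
  by apply: (WSSP_near_approx wssp adm_a); rewrite invr_gt0 ltr0n.
have [b b_A near_ab] :=
  near_diagonal_choice (adm_inhabited adm_a) P_antitone near_P.
exists b; split => //; apply/approx_lltP => e e_gt0.
have [k /ltW le_k_e] := filter_ex (near_infty_natSinv_lt (PosNum e_gt0)).
by apply: filterS (near_ab k) => m; exact: approx_le.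
Qed.

Lemma SSP_WSSP_rel A B : SSP_rel A B -> WSSP_rel A B.
Proof. by move=> ssp a /ssp [b [b_A llt_ab]]; exists id, b. Qed.

End RelativeSSP.

Theorem proposition2p7 (R : realType) (n : nat) (A B : set 'rV[R]_n) :
  closure A 0 -> closure B 0 -> Dir A `<=` Dir B ->
  (WSSP_rel A B -> SSP_rel A B) /\ (SSP_rel A B <-> WSSP_rel A B).
Proof.
move=> _ _ _; split; first exact: WSSP_SSP_rel.
by split; [exact: SSP_WSSP_rel | exact: WSSP_SSP_rel].
Qed.
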